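(* Let $D$ be a division algebra, $\sigma\in\mathrm{Aut}(D)$, and suppose $F=\mathcal{Z}(D)\cap D_\sigma$ is infinite. Let $f\in D[t_1,\ldots,t_d;\sigma]$ be a nonzero skew polynomial. Then there exist $a\in D$ and $a_1,\ldots,a_{d-1}\in F$ such that the polynomial $g=a\cdot f(t_1+a_1t_d,\ldots,t_{d-1}+a_{d-1}t_d,t_d)$ is a monic polynomial in $t_d$ with coefficients in $D[t_1,\ldots,t_{d-1};\sigma]$.
   Context: $\mathcal{Z}(D)$ is the center of $D$ and $D_\sigma=\{r\in D:\sigma(r)=r\}$. $D[t_1,\ldots,t_d;\sigma]$ denotes the skew polynomial ring in pairwise commuting variables with $t_ir=\sigma(r)t_i$ for all $r\in D$ and all $i$; it is identified with $D[t_1,\ldots,t_{d-1};\sigma][t_d;\sigma]$, where $\sigma$ is extended by $\sigma(t_i)=t_i$. For $a_1,\ldots,a_{d-1}\in F$, $f(t_1+a_1t_d,\ldots,t_{d-1}+a_{d-1}t_d,t_d)$ denotes the image of $f$ under the unique ring endomorphism of $D[t_1,\ldots,t_d;\sigma]$ fixing $D$ pointwise and sending $t_i\mapsto t_i+a_it_d$ for $i<d$ and $t_d\mapsto t_d$. Monic in $t_d$ means that, written as $\sum_j c_jt_d^j$ with $c_j\in D[t_1,\ldots,t_{d-1};\sigma]$, its leading coefficient is $1$. *)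

From HB Require Import structures.
From mathcomp Require Import all_boot all_order all_algebra.
From mathcomp Require Import mpoly.
Set Implicit Arguments. Unset Strict Implicit. Unset Printing Implicit Defensive.
Import GRing.Theory.
Local Open Scope ring_scope.

(* Skew polynomial ring D[t_0,...,t_{k-1}; s] in k pairwise commuting
   variables with t_i r = s(r) t_i.  The underlying additive group is that of
   {mpoly D[k]} (finitely supported coefficient functions on monomials, a
   skew polynomial being written sum_m c_m t^m with coefficients on the
   left); the multiplication is the skew one:
     (c t^m) * (c' t^m') = c s^{|m|}(c') t^(m+m'). *)

Section Skew.
Variable D : unitRingType.
Variable s : D -> D.

Definition smul (k : nat) (p q : {mpoly D[k]}) : {mpoly D[k]} :=
  \sum_(m <- msupp p) \sum_(m' <- msupp q)
     (p@_m * iter (mdeg m) s q@_m') *: 'X_[m + m'].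

Definition spow (k : nat) (p : {mpoly D[k]}) (e : nat) : {mpoly D[k]} :=
  iter e (smul p) 1.

Definition inF (x : D) : Prop := (forall y : D, x * y = y * x) /\ s x = x.

(* Variables t_1..t_d are indexed by 'I_n.+1 (d = n+1); t_d is ord_max,
   and t_i (i < d) is widen_ord _ i for i : 'I_n. *)

Definition subst_var (n : nat) (a : 'I_n -> D) (i : 'I_n.+1) : {mpoly D[n.+1]} :=
  match split (cast_ord (esym (addn1 n)) i) with
  | inl j => 'X_(widen_ord (leqnSn n) j) + a j *: 'X_(@ord_max n)
  | inr _ => 'X_(@ord_max n)
  end.

(* f(t_1 + a_1 t_d, ..., t_{d-1} + a_{d-1} t_d, t_d): image of
   f = sum_m f_m t^m under the ring endomorphism fixing D pointwise,
   i.e. sum_m f_m * prod_i phi(t_i)^(m_i) (skew products). *)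
Definition subst (n : nat) (a : 'I_n -> D) (f : {mpoly D[n.+1]}) : {mpoly D[n.+1]} :=
  \sum_(m <- msupp f)
     f@_m *: \big[@smul n.+1/1]_(i < n.+1) spow (subst_var a i) (m i).

(* Writing p = sum_j c_j t_d^j with c_j in D[t_1..t_{d-1}; s]: *)
Definition deg_last (n : nat) (p : {mpoly D[n.+1]}) : nat :=
  \max_(m <- msupp p) m (@ord_max n).

Definition drop_last (n : nat) (m : 'X_{1..n.+1}) : 'X_{1..n} :=
  [multinom m (widen_ord (leqnSn n) i) | i < n].

Definition coef_last (n : nat) (p : {mpoly D[n.+1]}) (j : nat) : {mpoly D[n]} :=
  \sum_(m <- msupp p | m (@ord_max n) == j) p@_m *: 'X_[drop_last m].

Definition monic_last (n : nat) (p : {mpoly D[n.+1]}) : Prop :=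
  p != 0 /\ coef_last p (deg_last p) = 1.

End Skew.

From HB Require Import structures.
From mathcomp Require Import all_boot all_order all_algebra.
From mathcomp Require Import mpoly.
Set Implicit Arguments. Unset Strict Implicit. Unset Printing Implicit Defensive.
Import GRing.Theory.
Local Open Scope ring_scope.

(* Take a_i = x^(B^i) for a single x in F and B larger than the total degree
   N of f.  As x is central and sigma-fixed, so are the substituted variables,
   and the skew substitution becomes the ordinary one of {mpoly D[n.+1]}; it
   sends t^m to x^(sum_i B^i m_i) t_d^|m| plus terms of lower t_d-degree.  The
   t_d^N-coefficient of the image of f is therefore Q(x) for the one-variable
   polynomial Q = sum_(|m| = N) f_m X^(sum_i B^i m_i), which is nonzero since
   base-B expansions with digits < B are unique (Kronecker substitution).  As F
   is infinite and central, some x in F is not a root of Q, and a = Q(x)^-1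
   makes the result monic in t_d. *)

Section BaseExpansion.
Local Open Scope nat_scope.

Lemma sum_digits_inj B k (g h : 'I_k -> nat) :
  (forall i, g i < B) -> (forall i, h i < B) ->
  \sum_(i < k) B ^ i * g i = \sum_(i < k) B ^ i * h i -> g =1 h.
Proof.
elim: k g h => [|k IH] g h ltg lth; first by move=> _ [].
have B_gt0 : 0 < B by apply: leq_ltn_trans (ltg ord0).
have shift (d : 'I_k.+1 -> nat) : \sum_(i < k.+1) B ^ i * d i =
    d ord0 + (\sum_(i < k) B ^ i * d (lift ord0 i)) * B.
  rewrite big_ord_recl mul1n big_distrl; congr (_ + _).
  by apply: eq_bigr => i _; rewrite expnSr mulnAC.
rewrite !shift => e.
have e0 : g ord0 = h ord0.
  by have := congr1 (modn^~ B) e; rewrite ![_ + _ * B]addnC !modnMDl !modn_small.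
move: e; rewrite e0 => /addnI/eqP; rewrite eqn_pmul2r // => /eqP/IH e'.
by move=> i; case: (unliftP ord0 i) => [j ->|->] //; apply: e'.
Qed.

End BaseExpansion.

Lemma uniq_roots_comm (D : unitRingType) (l : seq D) :
  (forall x : D, x != 0 -> x \is a GRing.unit) ->
  {in l &, forall x y, x * y = y * x} -> uniq l -> uniq_roots l.
Proof.
move=> unitD; elim: l => //= y l IH comm_yl /andP[y_l uniq_l].
rewrite IH ?andbT // => [|a b al bl]; last by apply: comm_yl; rewrite inE ?al ?bl orbT.
apply/allP => z zl; rewrite /diff_roots comm_yl ?mem_head ?inE ?zl ?orbT // eqxx /=.
by apply: unitD; rewrite subr_eq0; apply: contraNneq y_l => <-.
Qed.

Lemma exists_nonroot (D : unitRingType) (P : D -> Prop) (p : {poly D}) :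
  (forall x : D, x != 0 -> x \is a GRing.unit) ->
  (forall x y, P x -> P y -> x * y = y * x) ->
  (forall l : seq D, exists x, P x /\ x \notin l) ->
  p != 0 -> exists x, P x /\ p.[x] != 0.
Proof.
move=> unitD commP infP p_neq0.
have [l [size_l uniq_l Pl]] :
    exists l : seq D, [/\ size l = size p, uniq l & forall y, y \in l -> P y].
  elim: (size p) => [|k [l [size_l uniq_l Pl]]]; first by exists [::].
  have [y [Py y_l]] := infP l; exists (y :: l); split; rewrite /= ?size_l ?y_l //.
  by move=> z; rewrite inE => /predU1P[->|/Pl].
have : ~~ all (root p) l.
  apply/negP => roots_l; suff: (size l < size p)%N by rewrite size_l ltnn.
  apply: max_ring_poly_roots => //; apply: uniq_roots_comm => // x y xl yl.
  by apply: commP; apply: Pl.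
by case/allPn => x xl px; exists x; split; [apply: Pl | ].
Qed.

Section FixedSkewProducts.
Variables (D : unitRingType) (s : {rmorphism D -> D}) (k : nat).
Implicit Types p q : {mpoly D[k]}.

Lemma smul_fixed p q : map_mpoly s q = q -> smul s p q = p * q.
Proof.
move=> sq; rewrite /smul mpolyME big_allpairs; apply: eq_bigr => m _.
apply: eq_bigr => m' _ /=; congr (_ * _ *: _).
by elim: (mdeg m) => //= j ->; rewrite -mcoeff_map_mpoly sq.
Qed.

Lemma spow_fixed p e : map_mpoly s p = p -> spow s p e = p ^+ e.
Proof.
move=> sp; elim: e => [|e IH] //.
by rewrite /spow /= -/(spow s p e) IH smul_fixed ?exprS // rmorphXn /= sp.
Qed.

Lemma big_smul_fixed (I : Type) (r : seq I) (F : I -> {mpoly D[k]}) :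
  (forall i, map_mpoly s (F i) = F i) ->
  \big[@smul D s k/1]_(i <- r) F i = \prod_(i <- r) F i.
Proof.
move=> sF; elim: r => [|i r IH]; rewrite ?big_nil // !big_cons IH smul_fixed //.
by rewrite rmorph_prod; apply: eq_bigr => j _; apply: sF.
Qed.

End FixedSkewProducts.

Section SubstVar.
Variables (D : unitRingType) (n : nat) (a : 'I_n -> D).

Lemma subst_var_widen j :
  subst_var a (widen_ord (leqnSn n) j) = 'X_(widen_ord (leqnSn n) j) + a j *: 'X_ord_max.
Proof.
rewrite /subst_var; case: splitP => [j' /= e | k' /= e].
  by have -> : j' = j by apply: val_inj; rewrite /= -e.
by have := ltn_ord j; rewrite e ltnNge leq_addr.
Qed.

Lemma subst_var_max : subst_var a ord_max = 'X_ord_max.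
Proof.
by rewrite /subst_var; case: splitP => [j /= e | //]; have := ltn_ord j; rewrite -e ltnn.
Qed.

Lemma map_subst_var (s : {rmorphism D -> D}) i :
  (forall j, s (a j) = a j) -> map_mpoly s (subst_var a i) = subst_var a i.
Proof.
move=> sa; rewrite /subst_var; case: split => [j|_] //=.
  by rewrite rmorphD /= map_mpolyZ !map_mpolyX sa.
by rewrite map_mpolyX.
Qed.

End SubstVar.

Lemma subst_fixed (D : unitRingType) (s : {rmorphism D -> D}) n (a : 'I_n -> D) f :
  (forall j, s (a j) = a j) ->
  subst s a f = \sum_(m <- msupp f) f@_m *: \prod_(i < n.+1) subst_var a i ^+ m i.
Proof.
move=> sa; apply: eq_bigr => m _; congr (_ *: _).
under eq_bigr do rewrite spow_fixed ?map_subst_var //.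
by apply: big_smul_fixed => i; rewrite rmorphXn /= map_subst_var.
Qed.

Section LeadInLastVariable.
Variables (D : unitRingType) (n : nat).
Implicit Types (c : D) (p q : {mpoly D[n.+1]}) (u : 'X_{1..n.+1}).

Definition mnm_last (k : nat) : 'X_{1..n.+1} := (U_(ord_max) *+ k)%MM.

Lemma mnm_last_max k : mnm_last k ord_max = k.
Proof. by rewrite mulmnE mnm1E eqxx mul1n. Qed.

Lemma mnm_lastD k1 k2 : (mnm_last k1 + mnm_last k2)%MM = mnm_last (k1 + k2).
Proof. by apply/mnmP => i; rewrite mnmDE !mulmnE mulnDr. Qed.

Definition lead_last (k : nat) c p :=
  exists2 r, p = c *: 'X_[mnm_last k] + r & forall u, u \in msupp r -> (u ord_max < k)%N.

Lemma lead_last_le k c p u : lead_last k c p -> u \in msupp p -> (u ord_max <= k)%N.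
Proof.
case=> r -> ltr /msuppD_le; rewrite mem_cat => /orP[/msuppZ_le|/ltr/ltnW //].
by rewrite msuppX mem_seq1 => /eqP ->; rewrite mnm_last_max.
Qed.

Lemma lead_last_coef k c p u : lead_last k c p -> (k <= u ord_max)%N ->
  p@_u = if u == mnm_last k then c else 0.
Proof.
case=> r -> ltr ku; rewrite mcoeffD mcoeffZ mcoeffX memN_msupp_eq0 ?addr0.
  by rewrite eq_sym; case: eqP; rewrite ?mulr1 ?mulr0.
by apply/negP => /ltr; rewrite ltnNge ku.
Qed.

Lemma lead_last0 k : lead_last k 0 0.
Proof. by exists 0; rewrite ?scale0r ?addr0 // => u; rewrite msupp0. Qed.

Lemma lead_last1 : lead_last 0 1 1.
Proof. by exists 0; rewrite ?addr0 ?scale1r ?mpolyX0 // => u; rewrite msupp0. Qed.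

Lemma lead_lastD k c1 c2 p q :
  lead_last k c1 p -> lead_last k c2 q -> lead_last k (c1 + c2) (p + q).
Proof.
case=> r1 -> lt1 [r2 -> lt2]; exists (r1 + r2); first by rewrite scalerDl addrACA.
by move=> u /msuppD_le; rewrite mem_cat => /orP[/lt1|/lt2].
Qed.

Lemma lead_lastZ k a c p : lead_last k c p -> lead_last k (a * c) (a *: p).
Proof.
case=> r -> ltr; exists (a *: r); first by rewrite scalerDr scalerA.
by move=> u /msuppZ_le /ltr.
Qed.

Lemma lead_last_sum (I : Type) (r : seq I) (P : pred I) k (c : I -> D) F :
  (forall i, P i -> lead_last k (c i) (F i)) ->
  lead_last k (\sum_(i <- r | P i) c i) (\sum_(i <- r | P i) F i).
Proof.
move=> lF; apply: (big_ind2 (lead_last k)) => //; first exact: lead_last0.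
by move=> *; apply: lead_lastD.
Qed.

Lemma lead_last_lt k' k c p : (k' < k)%N -> lead_last k' c p -> lead_last k 0 p.
Proof.
move=> lt lp; exists p; first by rewrite scale0r add0r.
by move=> u /(lead_last_le lp) /leq_ltn_trans; apply.
Qed.

Lemma scale_mpolyXM c1 c2 m1 m2 :
  (c1 *: 'X_[m1]) * (c2 *: 'X_[m2]) = (c1 * c2) *: ('X_[m1 + m2] : {mpoly D[n.+1]}).
Proof.
rewrite -!mul_mpolyC mulrA -[_ * c2%:MP]mulrA -commr_mpolyX mulrA -mulrA.
by rewrite !mulrA -mpolyCM -mulrA -mpolyXD.
Qed.

Lemma lead_lastM k1 k2 c1 c2 p q :
  lead_last k1 c1 p -> lead_last k2 c2 q -> lead_last (k1 + k2) (c1 * c2) (p * q).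
Proof.
move=> lp lq; have leq_q := lead_last_le lq.
case: lp => r1 -> lt1; case: lq => r2 q_eq lt2.
exists ((c1 *: 'X_[mnm_last k1]) * r2 + r1 * q).
  by rewrite mulrDl {1}q_eq mulrDr scale_mpolyXM mnm_lastD addrA.
move=> u /msuppD_le; rewrite mem_cat.
case/orP=> /msuppM_le /allpairsP [[m1 m2] [/= m1P m2P ->]]; rewrite mnmDE.
  move: m1P => /msuppZ_le; rewrite msuppX mem_seq1 => /eqP ->.
  by rewrite mnm_last_max ltn_add2l lt2.
by rewrite -addSn leq_add ?lt1 ?leq_q.
Qed.

Lemma lead_lastX k c p e : lead_last k c p -> lead_last (k * e) (c ^+ e) (p ^+ e).
Proof.
move=> lp; elim: e => [|e IH]; first by rewrite muln0 !expr0; apply: lead_last1.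
by rewrite !exprS mulnS; apply: lead_lastM.
Qed.

Lemma lead_last_prod (I : Type) (r : seq I) (k : I -> nat) (c : I -> D) F :
  (forall i, lead_last (k i) (c i) (F i)) ->
  lead_last (\sum_(i <- r) k i) (\prod_(i <- r) c i) (\prod_(i <- r) F i).
Proof.
move=> lF; elim: r => [|i r IH]; first by rewrite !big_nil; apply: lead_last1.
by rewrite !big_cons; apply: lead_lastM.
Qed.

Lemma monic_last_lead_last k p : lead_last k 1 p -> monic_last p.
Proof.
move=> lp; have coef_p := lead_last_coef lp.
have p_top : p@_(mnm_last k) = 1 by rewrite coef_p ?mnm_last_max ?eqxx.
have top_supp : mnm_last k \in msupp p by rewrite mcoeff_msupp p_top oner_neq0.
split; first by apply: contraTneq top_supp => ->; rewrite msupp0.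
have -> : deg_last p = k.
  apply/eqP; rewrite /deg_last eqn_leq; apply/andP; split.
    by apply/bigmax_leqP_seq => u up _; apply: lead_last_le lp up.
  by rewrite -{1}(mnm_last_max k); apply: leq_bigmax_seq.
rewrite /coef_last (big_rem (mnm_last k)) //= mnm_last_max eqxx p_top scale1r.
have -> : drop_last (mnm_last k) = 0%MM.
  apply/mnmP => i; rewrite mnmE mnm0E mulmnE mnm1E.
  by rewrite -val_eqE /= gtn_eqF.
rewrite mpolyX0 big1_seq ?addr0 // => u /andP [/eqP uk up].
rewrite coef_p ?uk // ifN ?scale0r //.
by apply: contraTneq up => ->; rewrite mem_rem_uniqF ?msupp_uniq.
Qed.

End LeadInLastVariable.

Section Kronecker.
Variables (D : unitRingType) (n : nat).
Implicit Types m : 'X_{1..n.+1}.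

Definition wdeg (w : 'I_n -> nat) m : nat := \sum_(j < n) w j * m (widen_ord (leqnSn n) j).

Lemma lead_last_subst_mnm (x : D) w m :
  lead_last (mdeg m) (x ^+ wdeg w m)
    (\prod_(i < n.+1) subst_var (fun j => x ^+ w j) i ^+ m i).
Proof.
have lead_Xpow c i e : i != ord_max -> lead_last e (c ^+ e) (('X_i + c *: 'X_ord_max) ^+ e).
  move=> i_max; rewrite -[X in lead_last X]mul1n; apply: lead_lastX.
  exists 'X_i; first by rewrite /mnm_last mulm1n addrC.
  by move=> u; rewrite msuppX mem_seq1 => /eqP ->; rewrite mnm1E (negbTE i_max).
rewrite mdegE !big_ord_recr /= /wdeg -[x ^+ _]mulr1 -prodrXr subst_var_max.
rewrite -[X in lead_last _ (_ * X)](expr1n _ (m ord_max)).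
apply: lead_lastM; first apply: lead_last_prod => j.
  by rewrite exprM subst_var_widen; apply: lead_Xpow; rewrite -val_eqE /= ltn_eqF.
rewrite -[X in lead_last X]mul1n; apply: lead_lastX.
by exists 0; rewrite ?addr0 ?scale1r /mnm_last ?mulm1n // => u; rewrite msupp0.
Qed.

Lemma lead_last_subst (s : {rmorphism D -> D}) (x : D) w f N :
  s x = x -> (forall m, m \in msupp f -> mdeg m <= N)%N ->
  lead_last N (\sum_(m <- msupp f | mdeg m == N) f@_m * x ^+ wdeg w m)
    (subst s (fun j => x ^+ w j) f).
Proof.
move=> sx leN; rewrite subst_fixed => [|j]; last by rewrite rmorphXn /= sx.
rewrite big_mkcond /= !big_seq; apply: lead_last_sum => m mf.
have [<-|neN] := eqVneq (mdeg m) N; first exact/lead_lastZ/lead_last_subst_mnm.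
rewrite -(mulr0 f@_m); apply/lead_lastZ/(lead_last_lt _ (lead_last_subst_mnm x w m)).
by rewrite ltn_neqAle neN leN.
Qed.

Lemma wdeg_expn_inj B m1 m2 : mdeg m1 = mdeg m2 -> (mdeg m1 < B)%N ->
  wdeg (fun j : 'I_n => B ^ j)%N m1 = wdeg (fun j : 'I_n => B ^ j)%N m2 -> m1 = m2.
Proof.
move=> eq_deg lt_deg eq_w.
have le_mdeg m i : (m i <= mdeg m)%N by rewrite mdegE (bigD1 i) //= leq_addr.
have eq_low j : m1 (widen_ord (leqnSn n) j) = m2 (widen_ord (leqnSn n) j).
  apply: (sum_digits_inj (B := B)) eq_w j => j; apply: leq_ltn_trans (le_mdeg _ _) _ => //.
  by rewrite -eq_deg.
have eq_max : m1 ord_max = m2 ord_max.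
  by move: eq_deg; rewrite !mdegE !big_ord_recr /=; under eq_bigr do rewrite eq_low; move/addnI.
apply/mnmP => i; case: (unliftP ord_max i) => [j ->|->] //.
by have -> : lift ord_max j = widen_ord (leqnSn n) j by apply: val_inj; apply: lift_max.
Qed.

Lemma kronecker_poly_neq0 (f : {mpoly D[n.+1]}) B : f != 0 -> (mdeg (mlead f) < B)%N ->
  \sum_(m <- msupp f | mdeg m == mdeg (mlead f)) f@_m *: 'X^(wdeg (fun j : 'I_n => B ^ j)%N m)
    != 0.
Proof.
move=> f_neq0 lt_deg; set m0 := mlead f; set w := fun j : 'I_n => (B ^ j)%N.
have f_m0 : f@_m0 != 0 by rewrite -mcoeff_msupp mlead_supp.
apply: contra_neq f_m0 => /(congr1 (fun q : {poly D} => q`_(wdeg w m0))); rewrite coef0 => <-.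
rewrite coef_sum (big_rem m0) ?mlead_supp //= eqxx coefZ coefXn eqxx mulr1.
rewrite big1_seq ?addr0 // => m /andP[/eqP eq_deg m_rem].
rewrite coefZ coefXn; case: eqP => [/esym eq_w|_]; last by rewrite mulr0.
by move: m_rem; rewrite (wdeg_expn_inj eq_deg _ eq_w) ?eq_deg // mem_rem_uniqF ?msupp_uniq.
Qed.

End Kronecker.

Theorem lemma3p5 (D : unitRingType)
  (Ddiv : forall x : D, x != 0 -> x \is a GRing.unit)
  (s : {rmorphism D -> D}) (s_bij : bijective s)
  (F_infinite : forall l : seq D, exists x : D, inF s x /\ x \notin l)
  (n : nat) (f : {mpoly D[n.+1]}) (f_neq0 : f != 0) :
  exists (a : D) (a_ : 'I_n -> D),
    (forall i, inF s (a_ i)) /\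
    monic_last (a *: subst s a_ f).
Proof.
set N := mdeg (mlead f); set w := fun j : 'I_n => (N.+1 ^ j)%N.
have le_N m : m \in msupp f -> (mdeg m <= N)%N.
  by move/msize_mdeg_lt; rewrite -(mlead_deg f_neq0).
have F_comm x y : inF s x -> inF s y -> x * y = y * x by case=> x_central _ _; apply: x_central.
have [x [[x_central sx] Qx_neq0]] :=
  exists_nonroot Ddiv F_comm F_infinite (kronecker_poly_neq0 f_neq0 (ltnSn N)).
set c := _.[x] in Qx_neq0.
have c_eq : c = \sum_(m <- msupp f | mdeg m == N) f@_m * x ^+ wdeg w m.
  by rewrite /c horner_sum; apply: eq_bigr => m _; rewrite hornerZ hornerXn.
exists c^-1, (fun j => x ^+ w j); split.
  by move=> j; split=> [y|]; [apply/esym/commrX/esym | rewrite rmorphXn /= sx].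
apply: monic_last_lead_last; rewrite -(mulVr (Ddiv _ Qx_neq0)); apply: lead_lastZ.
by rewrite c_eq; apply: lead_last_subst.
Qed.
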